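(* Let $(A,\gamma)$ be a partially ordered set. If $\mathrm{hsdim}(A,\gamma)=1$, then $\gamma$ is a half-space, and $\dim(A,\gamma)=1$ if $\gamma$ is a linear order while $\dim(A,\gamma)=2$ if $\gamma$ is not a linear order. If $\mathrm{hsdim}(A,\gamma)\ge2$, then $\dim(A,\gamma)=\mathrm{hsdim}(A,\gamma)$.
   Context: A quasiorder on $A$ is a reflexive and transitive relation; $\Delta_A=\{(a,a)\mid a\in A\}$. A quasiorder $\alpha$ on $A$ is a half-space if there is a quasiorder $\beta$ on $A$ with $\alpha\cup\beta=A\times A$ and $\alpha\cap\beta=\Delta_A$. A half-space realizer of a quasiorder $\gamma$ on $A$ is a set $\{\alpha_i\mid i\in I\}$ of half-spaces on $A$ with $\bigcap_{i\in I}\alpha_i=\gamma$; $\mathrm{hsdim}(A,\gamma)$ is the minimum cardinality of a half-space realizer. $\dim(A,\gamma)$ is the order dimension: the least cardinality of a set of linear extensions of $\gamma$ whose intersection is $\gamma$. *)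

(* relations on an arbitrary type A, cardinalities as index types. *)
Set Implicit Arguments.

Definition relation (A : Type) := A -> A -> Prop.

Definition quasiorder {A : Type} (r : relation A) : Prop :=
  (forall a, r a a) /\ (forall a b c, r a b -> r b c -> r a c).

Definition partial_order {A : Type} (r : relation A) : Prop :=
  quasiorder r /\ (forall a b, r a b -> r b a -> a = b).

Definition linear_order {A : Type} (r : relation A) : Prop :=
  partial_order r /\ (forall a b, r a b \/ r b a).

Definition half_space {A : Type} (alpha : relation A) : Prop :=
  quasiorder alpha /\
  exists beta : relation A, quasiorder beta /\
    (forall a b, alpha a b \/ beta a b) /\
    (forall a b, (alpha a b /\ beta a b) <-> a = b).

Definition linear_extension {A : Type} (gamma L : relation A) : Prop :=
  linear_order L /\ (forall a b, gamma a b -> L a b).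

Definition intersection_is {A I : Type} (F : I -> relation A) (gamma : relation A) : Prop :=
  forall a b, (forall i, F i a b) <-> gamma a b.

Definition hs_realizer {A I : Type} (gamma : relation A) (F : I -> relation A) : Prop :=
  (forall i, half_space (F i)) /\ intersection_is F gamma.

Definition lin_realizer {A I : Type} (gamma : relation A) (F : I -> relation A) : Prop :=
  (forall i, linear_extension gamma (F i)) /\ intersection_is F gamma.

Definition injective {X Y : Type} (f : X -> Y) : Prop :=
  forall x y, f x = f y -> x = y.

(* "The cardinality |I| is the minimum cardinality of a realizer":
   there is a realizer indexed by I, and every realizer indexed by J
   admits an injection I -> J (i.e. |I| <= |J|). *)
Definition is_hsdim {A : Type} (gamma : relation A) (I : Type) : Prop :=
  (exists F : I -> relation A, hs_realizer gamma F) /\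
  (forall (J : Type) (G : J -> relation A), hs_realizer gamma G ->
     exists f : I -> J, injective f).

Definition is_dim {A : Type} (gamma : relation A) (I : Type) : Prop :=
  (exists F : I -> relation A, lin_realizer gamma F) /\
  (forall (J : Type) (G : J -> relation A), lin_realizer gamma G ->
     exists f : I -> J, injective f).

Definition card_one (I : Type) : Prop := exists i : I, forall j : I, j = i.
Definition card_ge2 (I : Type) : Prop := exists i j : I, i <> j.

From mathcomp Require Import ssreflect ssrfun ssrbool boolp classical_sets.
From Stdlib Require Import Classical.

Set Implicit Arguments.
Unset Strict Implicit.
Unset Printing Implicit Defensive.

Local Open Scope classical_set_scope.

(* Linear extensions are half-spaces, so a linear realizer is a half-space realizer and
   hsdim <= dim.  Conversely, let (F i)_i be a half-space realizer of gamma with two distinct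
   indices i0, i1.  A half-space is a weak order up to ties: its strict part is negatively
   transitive, and no point is both tied with a second point and incomparable with a third.
   Fix a linear extension K of the dominance order "no F i strictly reverses the pair, and
   gamma or some F i strictly contains it" (Szpilrajn).  Refine each F i to a linear order by
   breaking ties with K and incomparabilities against K, except at i0, where incomparable
   pairs are ordered against the refinement at i1.  Every pair outside gamma is reversed by
   one of these refinements, which gives a linear realizer indexed by the same set.  When
   |I| = 1, gamma is itself a half-space, and two linear extensions suffice unless gamma is
   linear. *)

Lemma relation_ext (A : Type) (r s : relation A) :
  (forall a b, r a b <-> s a b) -> r = s.
Proof.
by move=> rs; do 2 apply: funext => ?; apply: propext.
Qed.

Lemma one_point_extension (A : Type) (M : relation A) (a b : A) :
  partial_order M -> ~ M b a ->
  partial_order (fun u v => M u v \/ (M u a /\ M b v)).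
Proof.
move=> [[Mrefl Mtrans] Manti] Nba; split; first split.
- by move=> u; left.
- move=> u v w [Muv|[Mua Mbv]] [Mvw|[Mva Mbw]].
  + by left; apply: Mtrans Muv Mvw.
  + by right; split=> //; apply: Mtrans Muv Mva.
  + by right; split=> //; apply: Mtrans Mbv Mvw.
  + by case: Nba; apply: Mtrans Mbv Mva.
- move=> u v [Muv|[Mua Mbv]] [Mvu|[Mva Mbu]].
  + exact: Manti.
  + by case: Nba; apply: Mtrans Mbu (Mtrans _ _ _ Muv Mva).
  + by case: Nba; apply: Mtrans Mbv (Mtrans _ _ _ Mvu Mua).
  + by case: Nba; apply: Mtrans Mbv Mva.
Qed.

Section Szpilrajn.
Variables (A : Type) (P0 : relation A).
Hypothesis P0_po : partial_order P0.

Let extend (X : set (A * A)) : relation A := fun a b => P0 a b \/ X (a, b).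

Lemma chain_common_order (F : set (set (A * A))) :
  (forall X, F X -> partial_order (extend X)) -> total_on F subset ->
  forall a b c d, extend (\bigcup_(X in F) X) a b -> extend (\bigcup_(X in F) X) c d ->
  exists R : relation A, [/\ partial_order R, R a b, R c d &
    forall u v, R u v -> extend (\bigcup_(X in F) X) u v].
Proof.
move=> Fpo Ftot a b c d.
have sub X : F X -> forall u v, extend X u v -> extend (\bigcup_(X in F) X) u v.
  by move=> FX u v [P0uv|Xuv]; [left|right; exists X].
move=> [P0ab|[X FX Xab]] [P0cd|[Y FY Ycd]].
- by exists P0; split=> // u v; left.
- by exists (extend Y); split; [exact: Fpo|left|right|exact: sub].
- by exists (extend X); split; [exact: Fpo|right|left|exact: sub].
- have [XY|YX] := Ftot X Y FX FY.
  + by exists (extend Y); split; [exact: Fpo|right; apply: XY|right|exact: sub].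
  + by exists (extend X); split; [exact: Fpo|right|right; apply: YX|exact: sub].
Qed.

Lemma chain_union_partial_order (F : set (set (A * A))) :
  (forall X, F X -> partial_order (extend X)) -> total_on F subset ->
  partial_order (extend (\bigcup_(X in F) X)).
Proof.
move=> Fpo Ftot; have common := chain_common_order Fpo Ftot.
case: P0_po => [[P0refl _] _]; split; first split.
- by move=> a; left.
- move=> a b c ab bc; have [R [[[_ Rtrans] _] Rab Rbc RU]] := common _ _ _ _ ab bc.
  exact/RU/(Rtrans _ _ _ Rab Rbc).
- move=> a b ab ba; have [R [[_ Ranti] Rab Rba _]] := common _ _ _ _ ab ba.
  exact: Ranti.
Qed.

Theorem szpilrajn : exists L, linear_extension P0 L.
Proof.
pose P X := partial_order (extend X).
have [X [Xpo Xmax]] : exists X, P X /\ forall Y, X `<` Y -> ~ P Y.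
  by apply: Zorn_bigcup => F FP; apply: chain_union_partial_order => Y /FP.
exists (extend X); split; last by move=> a b; left.
split=> // a b; apply: NNPP => ab_incomparable.
pose M u v := extend X u v \/ (extend X u a /\ extend X b v).
have Mpo : partial_order M.
  by apply: one_point_extension => // ba; apply: ab_incomparable; right.
case: P0_po => [[P0refl _] _].
apply: (Xmax [set p | M p.1 p.2]).
- split=> [[u v] Xuv|MX]; first by left; right.
  apply: ab_incomparable; left.
  by right; apply: MX; right; split; left.
- rewrite /P (_ : extend _ = M) //; apply: relation_ext => u v /=.
  by split=> [[P0uv|//]|Muv]; [left; left|right].
Qed.
End Szpilrajn.

Definition converse (A : Type) (r : relation A) : relation A := fun a b => r b a.

Definition strict (A : Type) (r : relation A) : relation A := fun a b => r a b /\ ~ r b a.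

Lemma converse_linear (A : Type) (r : relation A) :
  linear_order r -> linear_order (converse r).
Proof.
move=> [[[rrefl rtrans] ranti] rtot]; split; first split; first split.
- exact: rrefl.
- by move=> a b c ba cb; apply: rtrans cb ba.
- by move=> a b ba ab; apply: ranti.
- by move=> a b; case: (rtot a b); [right|left].
Qed.

Section HalfSpace.
Variables (A : Type) (al : relation A).
Hypothesis al_hs : half_space al.

Lemma half_space_not_trans x y z : x <> z -> ~ al x y -> ~ al y z -> ~ al x z.
Proof.
case: al_hs => _ [be [[_ be_trans] [al_be_tot al_be_diag]]] xz nxy nyz xz'.
have bxy : be x y by case: (al_be_tot x y).
have byz : be y z by case: (al_be_tot y z).
by apply: xz; apply/al_be_diag; split=> //; apply: be_trans bxy byz.
Qed.

Lemma half_space_block x y z : x <> y -> al x y -> al y x -> al y z \/ al z y.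
Proof.
case: al_hs => [[_ al_trans] _] xy axy ayx; apply: NNPP => /not_or_and [nyz nzy].
have nxz : ~ al x z by move=> axz; apply: nyz; apply: al_trans ayx axz.
exact: half_space_not_trans xy nxz nzy axy.
Qed.

Lemma half_space_strict_neg_trans a b c :
  strict al a c -> strict al a b \/ strict al b c.
Proof.
case: al_hs => [[al_refl al_trans] _] [aac nca].
have ac : a <> c by move=> ac; apply: nca; rewrite ac; apply: al_refl.
case: (classic (al a b)) => [aab|nab].
- case: (classic (al b a)) => [aba|nba]; last by left.
  right; split; first exact: al_trans aba aac.
  by move=> acb; apply: nca; apply: al_trans acb aba.
- right; split.
  + by apply: NNPP => nbc; apply: half_space_not_trans ac nab nbc aac.
  + by move=> acb; apply: nab; apply: al_trans aac acb.
Qed.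
End HalfSpace.

Definition lex (A : Type) (al K Q : relation A) : relation A := fun x y =>
  (al x y /\ (al y x -> K x y)) \/ (~ al x y /\ ~ al y x /\ Q x y).

Section Lex.
Variables (A : Type) (al K Q : relation A).
Hypotheses (al_hs : half_space al) (K_lin : linear_order K) (Q_lin : linear_order Q).

Lemma lex_refl x : lex al K Q x x.
Proof.
by case: al_hs K_lin => [[al_refl _] _] [[[K_refl _] _] _]; left; split.
Qed.

Lemma lex_trans x y z : lex al K Q x y -> lex al K Q y z -> lex al K Q x z.
Proof.
have not_trans := half_space_not_trans al_hs; have block := half_space_block al_hs.
case: (classic (x = y)) => [<-|xy] //; case: (classic (y = z)) => [<-|yz] //.
case: (classic (x = z)) => [<- _ _|xz]; first exact: lex_refl.
case: al_hs K_lin Q_lin => [[_ al_trans] _] [[[_ K_trans] _] _] [[[_ Q_trans] _] _].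
move=> [[axy Kxy]|[nxy [nyx Qxy]]] [[ayz Kyz]|[nyz [nzy Qyz]]].
- left; split=> [|azx]; first exact: al_trans axy ayz.
  apply: K_trans (Kxy (al_trans _ _ _ ayz azx)) (Kyz (al_trans _ _ _ azx axy)).
- have nyx : ~ al y x by move=> ayx; case: (block x y z xy axy ayx).
  left; split=> [|azx]; last by case: nzy; apply: al_trans azx axy.
  by apply: NNPP => nxz; apply: (not_trans x z y xy nxz nzy).
- have nzy : ~ al z y.
    by move=> azy; case: (block y z x yz ayz azy) => a; [apply: nyx|apply: nxy];
      [apply: al_trans ayz a|apply: al_trans a azy].
  left; split=> [|azx]; last by case: nyx; apply: al_trans ayz azx.
  by apply: NNPP => nxz; apply: (not_trans y x z yz nyx nxz).
- right; split; first exact: not_trans nxy nyz.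
  by split; [apply: not_trans (nesym xz) nzy nyx|apply: Q_trans Qxy Qyz].
Qed.

Lemma lex_linear : linear_order (lex al K Q).
Proof.
case: K_lin Q_lin => [[_ K_anti] K_tot] [[_ Q_anti] Q_tot].
split; first split; first split.
- exact: lex_refl.
- exact: lex_trans.
- move=> x y [[axy Kxy]|[_ [nyx Qxy]]] [[ayx Kyx]|[_ [nxy' Qyx]]].
  + exact: K_anti (Kxy ayx) (Kyx axy).
  + by case: (nxy' axy).
  + by case: (nyx ayx).
  + exact: Q_anti.
- move=> x y; case: (classic (al x y)) => axy; case: (classic (al y x)) => ayx.
  + by case: (K_tot x y) => Kxy; [left|right]; left; split.
  + by left; left; split.
  + by right; left; split.
  + by case: (Q_tot x y) => Qxy; [left|right]; right.
Qed.

Lemma lex_linear_extension (g : relation A) :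
  (forall a b, g a b -> al a b) -> linear_extension g K -> linear_extension g (lex al K Q).
Proof.
move=> g_al [_ g_K]; split; first exact: lex_linear.
by move=> a b gab; left; split; [apply: g_al|move=> _; apply: g_K].
Qed.
End Lex.

Section LinearRealizer.
Variables (A I : Type) (g : relation A) (F : I -> relation A).
Hypotheses (g_po : partial_order g) (F_hs : hs_realizer g F).

Definition dominance : relation A := fun a b =>
  (forall i, ~ strict (F i) b a) /\ (g a b \/ exists i, strict (F i) a b).

Lemma dominance_partial_order : partial_order dominance.
Proof.
case: g_po F_hs => [[g_refl g_trans] g_anti] [F_half _].
have neg_trans i := half_space_strict_neg_trans (F_half i).
split; first split.
- by move=> a; split; [move=> i [] | left].
- move=> a b c [Nba gab] [Ncb gbc]; split.
    by move=> i /(neg_trans i c b a) [/(Ncb i)|/(Nba i)].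
  case: gab gbc => [gab|[i sab]] [gbc|[j sbc]].
  + by left; apply: g_trans gab gbc.
  + by right; exists j; case: (neg_trans j b a c sbc) => [/(Nba j)|].
  + by right; exists i; case: (neg_trans i a c b sab) => [|/(Ncb i)].
  + by right; exists i; case: (neg_trans i a c b sab) => [|/(Ncb i)].
- move=> a b [Nba [gab|[i sab]]] [Nab [gba|[j sba]]].
  + exact: g_anti.
  + by case: (Nba j).
  + by case: (Nab i).
  + by case: (Nab i).
Qed.

Variables (i0 i1 : I) (K : relation A).
Hypotheses (i01 : i0 <> i1) (K_ext : linear_extension dominance K).

(* A pair incomparable in every [F i] is ordered against [K] away from [i0], and at [i0]
   against [realizer i1]; so one of [realizer i0], [realizer i1] reverses it. *)
Definition tie_break (i : I) : relation A :=
  if pselect (i = i0) then converse (lex (F i1) K (converse K))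
  else converse K.

Definition realizer (i : I) : relation A := lex (F i) K (tie_break i).

Lemma tie_break_i0 : tie_break i0 = converse (lex (F i1) K (converse K)).
Proof. by rewrite /tie_break; case: pselect. Qed.

Lemma tie_break_other i : i <> i0 -> tie_break i = converse K.
Proof. by rewrite /tie_break; case: pselect. Qed.

Lemma realizer_linear_extension i : linear_extension g (realizer i).
Proof.
case: F_hs K_ext => [F_half F_int] [K_lin dom_K].
have g_F j a b : g a b -> F j a b by move/F_int.
have g_K : linear_extension g K.
  split=> // a b gab; apply: dom_K; split; last by left.
  by move=> j [_]; apply; apply: g_F.
apply: lex_linear_extension => //; last exact: g_F.
rewrite /tie_break; case: pselect => ?; apply: converse_linear => //.
exact: lex_linear (F_half i1) K_lin (converse_linear K_lin).
Qed.

Lemma realizer_reverses x y : ~ g x y -> exists i, realizer i y x.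
Proof.
case: F_hs K_ext => [F_half F_int] [K_lin dom_K] ngxy.
have [[_ K_anti] K_tot] := K_lin.
have incomparable_at_i0 : ~ F i0 x y -> ~ F i0 y x -> exists i, realizer i y x.
  move=> nxy nyx.
  have [_ i1_tot] := lex_linear (F_half i1) K_lin (converse_linear K_lin).
  case: (i1_tot x y) => [i1xy|i1yx].
  + by exists i0; right; rewrite tie_break_i0.
  + by exists i1; rewrite /realizer tie_break_other //; apply: nesym.
case: (K_tot x y) => [Kxy|Kyx].
- have [k nFxy] : exists k, ~ F k x y.
    by apply: not_all_ex_not => all_xy; apply/ngxy/F_int.
  case: (classic (F k y x)) => [Fyx|nFyx]; first by exists k; left; split=> // /nFxy.
  case: (classic (k = i0)) => [ki0|ki0]; first by subst k; apply: incomparable_at_i0.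
  by exists k; right; rewrite tie_break_other.
- case: (classic (exists i, strict (F i) y x)) => [[i [Fyx nFxy]]|no_strict].
    by exists i; left; split=> // /nFxy.
  case: (classic (F i0 y x)) => [F0yx|nF0yx]; first by exists i0; left.
  case: (classic (F i0 x y)) => [F0xy|nF0xy]; last exact: incomparable_at_i0.
  have dom_xy : dominance x y.
    by split=> [i syx|]; [apply: no_strict; exists i|right; exists i0].
  by case: ngxy; rewrite (K_anti x y (dom_K _ _ dom_xy) Kyx); case: g_po => [[]].
Qed.
End LinearRealizer.

Theorem lin_realizer_of_hs_realizer (A I : Type) (g : relation A) (F : I -> relation A)
    (i0 i1 : I) :
  partial_order g -> hs_realizer g F -> i0 <> i1 ->
  exists G : I -> relation A, lin_realizer g G.
Proof.
move=> g_po F_hs i01; have [K K_ext] := szpilrajn (dominance_partial_order g_po F_hs).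
have G_ext := realizer_linear_extension F_hs i0 i1 K_ext.
exists (realizer F i0 i1 K); split=> // a b.
split=> [all_ab|gab i]; last exact: (proj2 (G_ext i)).
apply: NNPP => ngab; have [i rba] := realizer_reverses g_po F_hs i01 K_ext ngab.
have [[[[_ _] G_anti] _] _] := G_ext i.
by apply: ngab; rewrite (G_anti a b (all_ab i) rba); case: g_po => [[]].
Qed.

Lemma intersection_is_const (A I : Type) (g : relation A) (i0 : I) :
  intersection_is (fun _ : I => g) g.
Proof. by move=> a b; split=> [/(_ i0)|]. Qed.

Lemma intersection_is_single (A I : Type) (F : I -> relation A) (g : relation A) (i0 : I) :
  intersection_is F g -> (forall i, i = i0) -> g = F i0.
Proof.
move=> F_int I_single; apply: relation_ext => a b; split=> [/F_int|F0ab]; first exact.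
by apply/F_int => i; rewrite (I_single i).
Qed.

Lemma linear_order_half_space (A : Type) (L : relation A) : linear_order L -> half_space L.
Proof.
move=> L_lin; have [[L_qo L_anti] L_tot] := L_lin; split=> //.
exists (converse L); split; first by case: (converse_linear L_lin) => -[].
split=> [a b|a b]; first by case: (L_tot a b); [left|right].
split=> [[]| ->]; first exact: L_anti.
by case: L_qo => L_refl _; split; apply: L_refl.
Qed.

Lemma lin_realizer_hs_realizer (A I : Type) (g : relation A) (G : I -> relation A) :
  lin_realizer g G -> hs_realizer g G.
Proof.
by case=> G_ext G_int; split=> // i; apply: linear_order_half_space; case: (G_ext i).
Qed.

Lemma hsdim_le_lin_realizer (A I J : Type) (g : relation A) (G : J -> relation A) :
  is_hsdim g I -> lin_realizer g G -> exists f : I -> J, injective f.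
Proof. by case=> _ I_min /lin_realizer_hs_realizer /I_min. Qed.

Lemma lin_realizer_nonlinear_other_index (A J : Type) (g : relation A) (G : J -> relation A)
    (j0 : J) :
  ~ linear_order g -> lin_realizer g G -> exists j1, j1 <> j0.
Proof.
move=> g_nlin [G_ext G_int]; apply: NNPP => /not_ex_all_not J_single.
apply: g_nlin; rewrite (intersection_is_single G_int (i0 := j0)).
  exact: (proj1 (G_ext j0)).
by move=> j; apply: NNPP; apply: J_single.
Qed.

Theorem theorem2p16 (A : Type) (gamma : relation A) (I : Type) :
  partial_order gamma ->
  is_hsdim gamma I ->
  (card_one I ->
     half_space gamma /\
     (linear_order gamma -> is_dim gamma unit) /\
     (~ linear_order gamma -> is_dim gamma bool)) /\
  (card_ge2 I -> is_dim gamma I).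
Proof.
move=> g_po hsdim; have [[F F_hs] _] := hsdim; split.
- case=> i I_single; have g_F : gamma = F i := intersection_is_single (proj2 F_hs) I_single.
  have g_hs : half_space gamma by rewrite g_F; apply: (proj1 F_hs).
  split=> //; split=> [g_lin|g_nlin]; split.
  + by exists (fun _ => gamma); split; [split|apply: intersection_is_const tt].
  + move=> J G /(hsdim_le_lin_realizer hsdim) [f _].
    by exists (fun _ => f i) => -[] [].
  + apply: (lin_realizer_of_hs_realizer (F := fun _ : bool => gamma) (i0 := true) (i1 := false))
      => //.
    by split; [|apply: intersection_is_const true].
  + move=> J G G_lin; have [f _] := hsdim_le_lin_realizer hsdim G_lin.
    have [j1 j1_ne] := lin_realizer_nonlinear_other_index (f i) g_nlin G_lin.
    by exists (fun b : bool => if b then f i else j1) => -[] [] // e; case: j1_ne; rewrite e.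
- case=> i [j ij]; split; first exact: lin_realizer_of_hs_realizer g_po F_hs ij.
  by move=> J G; apply: hsdim_le_lin_realizer.
Qed.
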